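(* Let $R=R_1\times\cdots\times R_t$ be a direct product of finite (not necessarily local) Frobenius rings, and let $\omega_i$ be the normalized homogeneous weight on $R_i$. Then the normalized homogeneous weight $\omega$ on $R$ satisfies $$\omega(a_1,\dots,a_t)=1-\prod_{i=1}^t\bigl(1-\omega_i(a_i)\bigr)\quad\text{for all }(a_1,\dots,a_t)\in R.$$
   Context: A finite ring $R$ (with $1$) is Frobenius if it admits a generating character, i.e. a character $\chi$ of $(R,+)$ such that $r\mapsto r\cdot\chi$, $(r\cdot\chi)(x)=\chi(xr)$, is a bijection $R\to\widehat R$; direct products of Frobenius rings are Frobenius. The normalized homogeneous weight on a finite Frobenius ring $S$ is the unique function $\omega:S\to\mathbb Q$ with $\omega(0)=0$, $\omega(x)=\omega(y)$ whenever $Sx=Sy$, and $\sum_{y\in Sx}\omega(y)=|Sx|$ for all $x\neq0$; it is known that $\omega(r)=1-\frac1{|S^*|}\sum_{u\in S^*}\chi(ru)$ for any generating character $\chi$ of $S$, where $S^*$ is the unit group. *)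

From HB Require Import structures.
From mathcomp Require Import all_boot all_order all_algebra all_field.
Set Implicit Arguments. Unset Strict Implicit. Unset Printing Implicit Defensive.
Import Order.TTheory GRing.Theory Num.Theory.
Local Open Scope ring_scope.

Section ProdRing.
Variables (t : nat) (R : 'I_t -> finPzRingType).

Definition prodRing := {dffun forall i : 'I_t, R i}.
HB.instance Definition _ := Finite.copy prodRing {dffun forall i : 'I_t, R i}.

Definition pr_zero : prodRing := [ffun i => 0].
Definition pr_opp (a : prodRing) : prodRing := [ffun i => - a i].
Definition pr_add (a b : prodRing) : prodRing := [ffun i => a i + b i].
Definition pr_one : prodRing := [ffun i => 1].
Definition pr_mul (a b : prodRing) : prodRing := [ffun i => a i * b i].

Fact pr_addA : associative pr_add.
Proof. by move=> a b c; apply/ffunP=> i; rewrite !ffunE addrA. Qed.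
Fact pr_addC : commutative pr_add.
Proof. by move=> a b; apply/ffunP=> i; rewrite !ffunE addrC. Qed.
Fact pr_add0 : left_id pr_zero pr_add.
Proof. by move=> a; apply/ffunP=> i; rewrite !ffunE add0r. Qed.
Fact pr_addN : left_inverse pr_zero pr_opp pr_add.
Proof. by move=> a; apply/ffunP=> i; rewrite !ffunE addNr. Qed.

HB.instance Definition _ :=
  GRing.isZmodule.Build prodRing pr_addA pr_addC pr_add0 pr_addN.

Fact pr_mulA : associative pr_mul.
Proof. by move=> a b c; apply/ffunP=> i; rewrite !ffunE mulrA. Qed.
Fact pr_mul1 : left_id pr_one pr_mul.
Proof. by move=> a; apply/ffunP=> i; rewrite !ffunE mul1r. Qed.
Fact pr_mulr1 : right_id pr_one pr_mul.
Proof. by move=> a; apply/ffunP=> i; rewrite !ffunE mulr1. Qed.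
Fact pr_mulDl : left_distributive pr_mul +%R.
Proof. by move=> a b c; apply/ffunP=> i; rewrite !ffunE mulrDl. Qed.
Fact pr_mulDr : right_distributive pr_mul +%R.
Proof. by move=> a b c; apply/ffunP=> i; rewrite !ffunE mulrDr. Qed.

HB.instance Definition _ :=
  GRing.Zmodule_isPzRing.Build prodRing pr_mulA pr_mul1 pr_mulr1 pr_mulDl pr_mulDr.

End ProdRing.

Lemma prodRingE t (R : 'I_t -> finPzRingType) (a b : prodRing R) i :
  ((a + b) i = a i + b i) * ((a * b) i = a i * b i) * ((0 : prodRing R) i = 0)
  * ((1 : prodRing R) i = 1).
Proof. by rewrite !ffunE. Qed.

Definition additive_character (S : finPzRingType) (chi : S -> algC) : Prop :=
  chi 0 = 1 /\ forall x y, chi (x + y) = chi x * chi y.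

(* chi is generating: r |-> r.chi, (r.chi)(x) = chi (x r), is a bijection
   from S onto the character group of (S,+). *)
Definition generating_character (S : finPzRingType) (chi : S -> algC) : Prop :=
  [/\ additive_character chi,
      (forall r r' : S, (forall x, chi (x * r) = chi (x * r')) -> r = r')
    & (forall psi : S -> algC, additive_character psi ->
         exists r : S, forall x, psi x = chi (x * r))].

Definition Frobenius_ring (S : finPzRingType) : Prop :=
  exists chi : S -> algC, generating_character chi.

Definition lideal (S : finPzRingType) (x : S) : {set S} := [set s * x | s : S].

Definition normalized_homogeneous_weight (S : finPzRingType) (w : S -> rat) : Prop :=
  [/\ w 0 = 0,
      (forall x y : S, lideal x = lideal y -> w x = w y)
    & (forall x : S, x != 0 -> \sum_(y in lideal x) w y = (#|lideal x|)%:R)].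

From HB Require Import structures.
From mathcomp Require Import all_boot all_order all_algebra all_field.
Import GRing.Theory Num.Theory.
Set Implicit Arguments. Unset Strict Implicit.
Local Open Scope ring_scope.

(* The proof needs no characters: the three defining properties of a
   normalized homogeneous weight determine it uniquely (by strong induction
   on the size of the left ideal Sx, the sum condition on Sx fixes the common
   value of w on the generators of Sx once w is known on smaller ideals).
   It therefore suffices to check that f(a) = 1 - prod_i (1 - w_i(a_i))
   satisfies these properties.  Invariance follows because the left ideal Ra
   is the product of the ideals R_i a_i.  For the sum condition, if a_k != 0
   then sum_{y in Ra} prod_i (1 - w_i(y_i)) = 0: slicing Ra along the k-th
   coordinate, all slices y_k = c (c in R_k a_k) are translates of one
   another, so the sum factors through sum_{c in R_k a_k} (1 - w_k(c)),
   which vanishes by the sum condition for w_k. *)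

Section LeftIdeals.
Variable S : finPzRingType.
Implicit Types x y : S.

Lemma lidealP x y : reflect (exists s, y = s * x) (y \in lideal x).
Proof. by apply: (iffP imsetP) => [[s _ ->]|[s ->]]; exists s. Qed.

Lemma mem_lideal x : x \in lideal x.
Proof. by apply/lidealP; exists 1; rewrite mul1r. Qed.

Lemma lideal_sub x y : y \in lideal x -> lideal y \subset lideal x.
Proof.
move=> /lidealP [s ->]; apply/subsetP => z /lidealP [r ->].
by apply/lidealP; exists (r * s); rewrite mulrA.
Qed.

Lemma nhw_sum_split (w : S -> rat) :
  normalized_homogeneous_weight w -> forall x,
  \sum_(y in lideal x) w y =
    w x *+ #|[pred y in lideal x | lideal y == lideal x]|
    + \sum_(y in lideal x | lideal y \proper lideal x) w y.
Proof.
case=> _ w_inv _ x; rewrite (bigID (fun y => lideal y == lideal x)) /=.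
rewrite (eq_bigr (fun=> w x)); last by move=> y /andP[_ /eqP /w_inv].
rewrite sumr_const; congr (_ + _); apply: eq_bigl => y.
by case: (boolP (y \in lideal x)) => //= /lideal_sub y_sub; rewrite properEneq y_sub andbT.
Qed.

Lemma nhw_unique (w w' : S -> rat) :
  normalized_homogeneous_weight w -> normalized_homogeneous_weight w' ->
  w =1 w'.
Proof.
move=> nhw nhw'; have [w0 _ w_sum] := nhw; have [w'0 _ w'_sum] := nhw'.
suff eq_small n x : (#|lideal x| <= n)%N -> w x = w' x by move=> x; apply: eq_small.
elim: n x => [|n IHn] x.
  by rewrite leqn0 => /eqP/card0_eq/(_ x); rewrite mem_lideal.
move=> le_x_n; have [->|nz_x] := eqVneq x 0; first by rewrite w0 w'0.
have eq_lower : \sum_(y in lideal x | lideal y \proper lideal x) w y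
              = \sum_(y in lideal x | lideal y \proper lideal x) w' y.
  apply: eq_bigr => y /andP[_ /proper_card lt_yx]; apply: IHn.
  by rewrite -ltnS (leq_trans lt_yx).
set gens := [pred y in lideal x | lideal y == lideal x].
have gens_gt0 : (#|gens| > 0)%N by apply/card_gt0P; exists x; rewrite inE mem_lideal /=.
have := w_sum x nz_x; rewrite -(w'_sum x nz_x) (nhw_sum_split nhw) (nhw_sum_split nhw') eq_lower.
by move/addIr/(pmulrnI gens_gt0).
Qed.

End LeftIdeals.

Section ProductRing.
Variables (t : nat) (R : 'I_t -> finPzRingType).
Implicit Types a x y : prodRing R.

Lemma prmulE x y i : (x * y) i = x i * y i.
Proof. exact: (prodRingE x y i).1.1.2. Qed.

Lemma pr0E i : (0 : prodRing R) i = 0.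
Proof. exact: (prodRingE 0 0 i).1.2. Qed.

Lemma lideal_prodE a y : (y \in lideal a) = [forall i, y i \in lideal (a i)].
Proof.
apply/lidealP/forallP => [[s ->] i | y_in].
  by apply/lidealP; exists (s i); rewrite prmulE.
exists (finfun (fun i => odflt 0 [pick s | y i == s * a i])).
apply/ffunP => i; rewrite prmulE ffunE.
case: pickP => [s /eqP //| no_s]; have /lidealP [s y_s] := y_in i.
by have := no_s s; rewrite y_s eqxx.
Qed.

Lemma lideal_coord x y i : lideal x = lideal y -> lideal (x i) = lideal (y i).
Proof.
suff sub (u v : prodRing R) : v \in lideal u -> lideal (v i) \subset lideal (u i).
  by move=> Lxy; apply/eqP; rewrite eqEsubset !sub // ?Lxy ?mem_lideal // -Lxy mem_lideal.
by rewrite lideal_prodE => /forallP/(_ i)/lideal_sub.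
Qed.

Definition updc (y : prodRing R) (k : 'I_t) (c : R k) : prodRing R :=
  finfun (dfwith (fun j => y j) c).

Lemma updc_in y k (c : R k) : updc y c k = c.
Proof. by rewrite ffunE dfwith_in. Qed.

Lemma updc_out y k (c : R k) j : k != j -> updc y c j = y j.
Proof. by move=> kj; rewrite ffunE dfwith_out. Qed.

Lemma updc_updc y k (c d : R k) : updc (updc y c) d = updc y d.
Proof.
apply/ffunP=> j; have [<-|kj] := eqVneq k j; first by rewrite !updc_in.
by rewrite !updc_out.
Qed.

Lemma updc_eq y k (c : R k) : (updc y c == y) = (y k == c).
Proof.
apply/eqP/eqP => [<-|yc]; first by rewrite updc_in.
apply/ffunP=> j; have [<-|kj] := eqVneq k j; first by rewrite updc_in.
by rewrite updc_out.
Qed.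

Lemma updc_lideal a y k (c : R k) :
  c \in lideal (a k) -> y \in lideal a -> updc y c \in lideal a.
Proof.
rewrite !lideal_prodE => c_in /forallP y_in; apply/forallP => j.
by have [<-|kj] := eqVneq k j; rewrite ?updc_in ?updc_out.
Qed.

(* A function not depending on the k-th coordinate has the same sum over all
   slices {y in Ra | y_k = c}, c in R_k a_k: translating the k-th coordinate
   is a bijection between slices. *)
Lemma slice_sum_const (V : nmodType) (F : prodRing R -> V) a k (c : R k) :
  (forall y (d : R k), F (updc y d) = F y) -> c \in lideal (a k) ->
  \sum_(y in lideal a | y k == c) F y = \sum_(y in lideal a | y k == 0) F y.
Proof.
move=> F_k c_in; have zero_in : 0 \in lideal (a k) by apply/lidealP; exists 0; rewrite mul0r.
rewrite (reindex_onto (fun y => updc y c) (fun y => updc y (0 : R k))); last first.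
  by move=> y /andP[_ yc]; apply/eqP; rewrite updc_updc updc_eq.
apply: eq_big => [y|y _]; last exact: F_k.
rewrite updc_in eqxx andbT updc_updc updc_eq.
have [y0|] := eqVneq (y k) 0; rewrite ?andbF ?andbT //.
apply/idP/idP => [|y_in]; last exact: updc_lideal.
have y_fixed : updc y (0 : R k) = y by apply/eqP; rewrite updc_eq y0.
by move/(updc_lideal zero_in); rewrite updc_updc y_fixed.
Qed.

Lemma sum_lideal_prod_eq0 (V : comPzRingType) (g : forall i, R i -> V) a k :
  \sum_(c in lideal (a k)) g k c = 0 ->
  \sum_(y in lideal a) \prod_(i < t) g i (y i) = 0.
Proof.
move=> gk_sum0; pose rest y := \prod_(i < t | i != k) g i (y i).
have rest_k y (d : R k) : rest (updc y d) = rest y.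
  by apply: eq_bigr => i ik; rewrite updc_out // eq_sym.
have coord_in y : y \in lideal a -> y k \in lideal (a k).
  by rewrite lideal_prodE => /forallP.
rewrite (partition_big (fun y => y k) (mem (lideal (a k))) coord_in) /=.
under eq_bigr => c c_in.
  rewrite (eq_bigr (fun y => g k c * rest y)); last first.
    by move=> y /andP[_ /eqP <-]; rewrite (bigD1 k).
  rewrite -mulr_sumr slice_sum_const //.
over.
by rewrite -mulr_suml gk_sum0 mul0r.
Qed.

Lemma prod_neq0 x : x != 0 -> exists k, x k != 0.
Proof.
move=> nz_x; suff /existsP : [exists k, x k != 0] by [].
apply: contraNT nz_x; rewrite negb_exists => /forallP all0.
by apply/eqP/ffunP => i; rewrite pr0E; apply/eqP/negPn/all0.
Qed.

Definition prod_weight (w : forall i, R i -> rat) (a : prodRing R) : rat :=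
  1 - \prod_(i < t) (1 - w i (a i)).

Lemma prod_weight_nhw (w : forall i, R i -> rat) :
  (forall i, normalized_homogeneous_weight (w i)) ->
  normalized_homogeneous_weight (prod_weight w).
Proof.
move=> nhw; split.
- rewrite /prod_weight big1 ?subrr // => i _.
  by have [w0 _ _] := nhw i; rewrite pr0E w0 subr0.
- move=> x y Lxy; rewrite /prod_weight; congr (1 - _); apply: eq_bigr => i _.
  by have [_ w_inv _] := nhw i; rewrite (w_inv _ _ (lideal_coord i Lxy)).
- move=> x /prod_neq0 [k nz_xk]; rewrite /prod_weight sumrB sumr_const.
  have [_ _ wk_sum] := nhw k.
  rewrite (@sum_lideal_prod_eq0 _ (fun i c => 1 - w i c) _ k) ?subr0 //.
  by rewrite sumrB sumr_const wk_sum ?subrr.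
Qed.

End ProductRing.

Unset Implicit Arguments.

Theorem proposition3p7 (t : nat) (R : 'I_t -> finPzRingType)
    (w : forall i : 'I_t, R i -> rat) (wR : prodRing R -> rat) :
  (forall i, Frobenius_ring (R i)) ->
  (forall i, normalized_homogeneous_weight (w i)) ->
  normalized_homogeneous_weight wR ->
  forall a : prodRing R, wR a = 1 - \prod_(i < t) (1 - w i (a i)).
Proof.
move=> _ nhw nhwR a.
exact: nhw_unique nhwR (prod_weight_nhw nhw) a.
Qed.
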